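(* Let $G$ be a graph with $V(G)=[n]$ and without isolated vertices, and let $I=[n]\setminus[n-i]$ be a maximal independent set of $G$ with $\gamma(G;I)=i\gamma(G)$. Write $\overline{S}=[n]\setminus S$ and order the facets of $\mathcal{NC}(G)$ by $\prec$. For $\sigma\in\mathcal{NC}(G)$ let $\beta(\sigma)=|N(\overline{\sigma}\cap\overline{I})\cap\overline{\sigma}\cap I|$. Then for every $\sigma\in\mathcal{NC}(G)$ with $\beta(\sigma)\ge1$ we have $|M_\prec(\sigma)|\le n-i\gamma(G)-\beta(\sigma)$, and for every $\sigma\in\mathcal{NC}(G)$ we have $|M_\prec(\sigma)|\le n-i\gamma(G)-1$.
   Context: $\mathcal{NC}(G)$ is the simplicial complex on $V(G)$ whose faces are the sets $W\subseteq V(G)$ such that $V(G)\setminus W$ contains both endpoints of some edge; its facets are the sets $[n]\setminus\{a,b\}$ for edges $ab$. $\gamma(G;A)$ is the minimum size of a set $D$ such that every vertex of $A$ has a neighbor in $D$; $i\gamma(G)=\max\{\gamma(G;I): I\text{ independent}\}$. $N(S)=\{v: uv\in E(G)\text{ for some }u\in S\}$. For edges $a_1b_1,a_2b_2$ with $a_j<b_j$, $a_1b_1<_L a_2b_2$ if $b_1<b_2$, or $b_1=b_2$ and $a_1<a_2$; for distinct facets, $\sigma\prec\tau$ iff $\overline{\sigma}<_L\overline{\tau}$, giving a linear order $\sigma_1,\dots,\sigma_m$ of facets. For a face $\sigma$, let $i$ be least with $\sigma\subseteq\sigma_i$; if $i=1$, $\mathrm{mes}_\prec(\sigma)$ is empty;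 otherwise $\mathrm{mes}_\prec(\sigma)=(v_1,\dots,v_{i-1})$ with $v_1=\min(\sigma\setminus\sigma_1)$ and, for $2\le k\le i-1$, $v_k=\min(\{v_1,\dots,v_{k-1}\}\cap(\sigma\setminus\sigma_k))$ if nonempty, else $v_k=\min(\sigma\setminus\sigma_k)$. $M_\prec(\sigma)$ is the set of vertices appearing in $\mathrm{mes}_\prec(\sigma)$. *)

(* Graph on vertex set [n], encoded as 'I_n (vertex k+1 of
   the paper is the ordinal k; all numeric comparisons are preserved). *)
From mathcomp Require Import all_boot.
Set Implicit Arguments. Unset Strict Implicit. Unset Printing Implicit Defensive.

Section Defs.
Variables (n : nat) (e : rel 'I_n).

Definition simple_graph : Prop := symmetric e /\ irreflexive e.

Definition no_isolated : Prop := forall v : 'I_n, exists u, e v u.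

Definition nbhd (S : {set 'I_n}) : {set 'I_n} :=
  [set v | [exists u in S, e u v]].

Definition independent (I : {set 'I_n}) : bool :=
  [forall u in I, forall v in I, ~~ e u v].

Definition maximal_independent (I : {set 'I_n}) : Prop :=
  independent I /\
  forall J : {set 'I_n}, independent J -> I \subset J -> J = I.

Definition dominates (D A : {set 'I_n}) : bool :=
  [forall a in A, exists d in D, e a d].

(* gamma(G;A): minimum size of such a D (the whole vertex set works when G
   has no isolated vertices, so the default n is never the "empty min") *)
Definition gammaA (A : {set 'I_n}) : nat :=
  \big[minn/n]_(D : {set 'I_n} | dominates D A) #|D|.

Definition igamma : nat :=
  \max_(I : {set 'I_n} | independent I) gammaA I.

Definition NCface (s : {set 'I_n}) : bool :=
  [exists a, exists b, [&& e a b, a \notin s & b \notin s]].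

Definition is_edge_pair (p : 'I_n * 'I_n) : bool :=
  ((p.1 : nat) < p.2) && e p.1 p.2.

Definition edges : seq ('I_n * 'I_n) :=
  filter is_edge_pair [seq (a, b) | a <- enum 'I_n, b <- enum 'I_n].

Definition leL (p q : 'I_n * 'I_n) : bool :=
  ((p.2 : nat) < q.2) || ((p.2 == q.2) && ((p.1 : nat) <= q.1)).

Definition facets : seq {set 'I_n} :=
  [seq [set: 'I_n] :\ p.1 :\ p.2 | p : 'I_n * 'I_n <- sort leL edges].

Definition setmin (D : {set 'I_n}) : option 'I_n :=
  [pick x in D | [forall y in D, (x <= y)%N]].

Definition mes_step (s : {set 'I_n}) (acc : seq 'I_n) (F : {set 'I_n}) :
    seq 'I_n :=
  let D := s :\: F in
  let C := [set x in acc] :&: D in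
  match (if setmin C is Some v then Some v else setmin D) with
  | Some v => rcons acc v
  | None => acc
  end.

(* mes(sigma) = (v_1, ..., v_{i-1}) where sigma_i is the first facet
   containing sigma (0-based index = find ...) *)
Definition mes (s : {set 'I_n}) : seq 'I_n :=
  foldl (mes_step s) [::] (take (find (fun F : {set 'I_n} => s \subset F) facets) facets).

Definition Mset (s : {set 'I_n}) : {set 'I_n} := [set x in mes s].

End Defs.

(* Each entry x of mes(s) is the least vertex of s on some edge ab (a < b) scanned
   before the first facet containing s, whose edge we call a'b'.  So x \in s,
   x <= b', and either x = a < b, or x = b and a \notin s.  Since I is independent
   and consists of the largest vertices, an entry x \in I cannot be the smaller
   endpoint, so it has a neighbour in ~s :&: ~I.  Therefore D = ~I :\: M, plus one
   neighbour of each vertex of I not dominated by D, dominates I, and M :&: I and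
   the beta(s) vertices counted by beta are disjoint sets of vertices of I
   dominated by D; counting gives i-gamma + |M| + beta(s) <= n.  If beta(s) = 0
   then b' \notin I (else b' would be counted by beta), hence M \subset ~I, and
   b' can be removed from D as well. *)

From HB Require Import structures.
From mathcomp Require Import all_boot zify.
Set Implicit Arguments. Unset Strict Implicit. Unset Printing Implicit Defensive.

Definition edge_facet {n} (p : 'I_n * 'I_n) : {set 'I_n} := [set: 'I_n] :\ p.1 :\ p.2.

Section Facets.
Variables (n : nat) (e : rel 'I_n).

Lemma facetsE : facets e = map edge_facet (sort (@leL n) (edges e)).
Proof. by []. Qed.

Lemma mem_edge_facet (p : 'I_n * 'I_n) x :
  (x \in edge_facet p) = (x != p.1) && (x != p.2).
Proof. by rewrite !inE andbT andbC. Qed.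

Lemma mem_edges p : (p \in edges e) = (p.1 < p.2) && e p.1 p.2.
Proof.
rewrite mem_filter andbC; case: p => a b.
by rewrite (allpairs_f (fun x y => (x, y))) ?mem_enum.
Qed.

Lemma leL_trans : transitive (@leL n).
Proof.
move=> q p r; rewrite /leL -!val_eqE /=.
by move=> /orP[?|/andP[/eqP ? ?]] /orP[?|/andP[/eqP ? ?]]; lia.
Qed.

Lemma leL_total : total (@leL n).
Proof.
by move=> p q; rewrite /leL -!val_eqE /=; case: ltngtP => //= _; exact: leq_total.
Qed.

Lemma leL_snd (p q : 'I_n * 'I_n) : leL p q -> p.2 <= q.2.
Proof. by case/orP => [/ltnW|/andP[/eqP->]]. Qed.

Lemma subset_edge_facet (s : {set 'I_n}) (p : 'I_n * 'I_n) :
  (s \subset edge_facet p) = (p.1 \notin s) && (p.2 \notin s).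
Proof.
apply/subsetP/andP => [sF|[p1s p2s] x xs].
  by split; apply/negP => /sF; rewrite mem_edge_facet eqxx ?andbF.
by rewrite mem_edge_facet; apply/andP; split; apply: contraTneq xs => ->.
Qed.

End Facets.

Lemma sorted_take_nth (T : eqType) (r : rel T) x0 (t : seq T) k :
  transitive r -> sorted r t -> k < size t ->
  {in take k t, forall x, r x (nth x0 t k)}.
Proof.
move=> r_tr srt kt x xt; have := srt.
rewrite sorted_pairwise // -{1}(cat_take_drop k t) pairwise_cat => /and3P[/allrelP rtd _ _].
apply: rtd => //; rewrite -[k in nth _ _ k]addn0 -nth_drop.
by apply: mem_nth; rewrite size_drop subn_gt0.
Qed.

Lemma setminP n (D : {set 'I_n}) v :
  setmin D = Some v -> v \in D /\ {in D, forall y : 'I_n, v <= y}.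
Proof.
rewrite /setmin; case: pickP => // x /andP[xD /forallP xmin] [<-].
by split=> // y yD; have := xmin y; rewrite yD.
Qed.

Section Mes.
Variables (n : nat) (e : rel 'I_n) (s : {set 'I_n}).

Definition mes_vertex (bm : nat) (x : 'I_n) : Prop :=
  [/\ x \in s, x <= bm & exists y : 'I_n,
      (x < y /\ e x y) \/ [/\ y < x, e y x & y \notin s]].

Lemma mes_step_vertex bm acc q :
  q \in edges e -> q.2 <= bm -> {in acc, forall x, mes_vertex bm x} ->
  {in mes_step s acc (edge_facet q), forall x, mes_vertex bm x}.
Proof.
rewrite mem_edges => /andP[q12 eq] qbm accV.
have memD x : (x \in s :\: edge_facet q) = (x \in s) && ((x == q.1) || (x == q.2)).
  by rewrite in_setD mem_edge_facet negb_and !negbK andbC.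
rewrite /mes_step; case hC: (setmin _) => [v|].
  have [/setIP[/[!inE] vacc _] _] := setminP hC.
  by move=> x; rewrite mem_rcons inE => /predU1P[->|]; apply: accV.
case hD: (setmin _) => [v|]; last exact: accV.
have [/[!memD]/andP[vs vq] vmin] := setminP hD.
move=> x; rewrite mem_rcons inE => /predU1P[->{x}|]; last exact: accV.
case/orP: vq => /eqP vq; rewrite vq in vs vmin *.
  by split=> //; [exact: ltnW (leq_trans q12 qbm) | exists q.2; left].
split=> //; exists q.1; right; split=> //.
apply/negP => q1s; have := vmin q.1; rewrite memD q1s eqxx => /(_ isT).
by rewrite leqNgt q12.
Qed.

Lemma foldl_mes_step_vertex bm acc (L : seq ('I_n * 'I_n)) :
  {in L, forall q, q \in edges e /\ q.2 <= bm} ->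
  {in acc, forall x, mes_vertex bm x} ->
  {in foldl (mes_step s) acc (map edge_facet L), forall x, mes_vertex bm x}.
Proof.
elim: L acc => [|q L IHL] acc //= LV accV; apply: IHL.
  by move=> q' q'L; apply: LV; rewrite inE q'L orbT.
by have [qE qbm] := LV q (mem_head q L); apply: mes_step_vertex.
Qed.

Lemma Mset_vertex : symmetric e -> irreflexive e -> NCface e s ->
  exists a b : 'I_n, [/\ a \notin s, b \notin s, e a b &
    {in Mset e s, forall x, mes_vertex b x}].
Proof.
move=> sym irr /existsP[a0 /existsP[b0 /and3P[eab a0s b0s]]].
set E := sort (@leL n) (edges e).
have hasE : has (fun p => s \subset edge_facet p) E.
  apply/hasP; case: (ltngtP a0 b0) => [ab|ba|/val_inj ab].
  - exists (a0, b0);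
    by rewrite ?mem_sort ?mem_edges ?subset_edge_facet /= ?ab ?eab ?a0s.
  - exists (b0, a0);
    by rewrite ?mem_sort ?mem_edges ?subset_edge_facet /= ?ba 1?sym ?eab ?b0s.
  - by move: eab; rewrite ab irr.
have [q0 _ _] := hasP hasE.
set k := find (fun p => s \subset edge_facet p) E.
set p := nth q0 E k.
have kE : k < size E by rewrite -has_find.
have /[!subset_edge_facet]/andP[p1s p2s] : s \subset edge_facet p := nth_find q0 hasE.
have /[!mem_sort]/[!mem_edges]/andP[_ ep] : p \in E by apply: mem_nth.
exists p.1, p.2; split=> // x; rewrite inE /mes facetsE find_map -map_take -/k.
apply: foldl_mes_step_vertex => // q qk; split.
  by rewrite -(mem_sort (@leL n)); apply: mem_take qk.
apply/leL_snd/(sorted_take_nth q0 (@leL_trans n)) => //.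
exact: sort_sorted (@leL_total n) _.
Qed.

End Mes.

HB.instance Definition _ := SemiGroup.isComLaw.Build nat minn minnA minnC.

Section Domination.
Variables (n : nat) (e : rel 'I_n).

Lemma gammaA_le (A D : {set 'I_n}) : dominates e D A -> gammaA e A <= #|D|.
Proof.
by move=> DA; rewrite /gammaA (big_rem_AC _ _ _ _ (mem_index_enum D)) DA geq_minl.
Qed.

Lemma nbhdS (S T : {set 'I_n}) : S \subset T -> nbhd e S \subset nbhd e T.
Proof.
move=> ST; apply/subsetP => v /[!inE] /existsP[u /andP[uS euv]].
by apply/existsP; exists u; rewrite (subsetP ST).
Qed.

Hypotheses (sym : symmetric e) (noiso : no_isolated e).

Lemma gammaA_le_undominated (A D : {set 'I_n}) :
  gammaA e A <= #|D| + #|A :\: nbhd e D|.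
Proof.
pose f v := xchoose (noiso v).
have dom : dominates e (D :|: f @: (A :\: nbhd e D)) A.
  apply/forallP => u; apply/implyP => uA; apply/existsP.
  case: (boolP (u \in nbhd e D)) => [/[!inE]/existsP[d /andP[dD edu]]|uN].
    by exists d; rewrite inE dD sym edu.
  by exists (f u); rewrite xchooseP inE imset_f ?orbT // inE uN uA.
apply: leq_trans (gammaA_le dom) _.
by rewrite (leq_trans (leq_card_setU _ _)) // leq_add2l leq_imset_card.
Qed.

Lemma gammaA_complement_bound (I X : {set 'I_n}) :
  gammaA e I + #|X :&: ~: I| + #|I :&: nbhd e (~: I :\: X)| <= n.
Proof.
have := gammaA_le_undominated I (~: I :\: X).
have := cardsID X (~: I); have := cardsID (nbhd e (~: I :\: X)) I.
have := cardsC I; rewrite card_ord [X :&: _]setIC; lia.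
Qed.

End Domination.

Section Counting.
Variables (n : nat) (e : rel 'I_n) (I : {set 'I_n}).
Hypotheses (sym : symmetric e) (irr : irreflexive e) (noiso : no_isolated e).
Hypothesis indI : independent e I.
Hypothesis upI : forall x y : 'I_n, x <= y -> x \in I -> y \in I.

Lemma independent_nonadj u v : u \in I -> v \in I -> ~~ e u v.
Proof. by move=> uI vI; move/forall_inP/(_ u uI)/forall_inP/(_ v vI): indI. Qed.

Lemma Mset_I_nbhd s b : {in Mset e s, forall x, mes_vertex e s b x} ->
  Mset e s :&: I \subset nbhd e (~: s :&: ~: I).
Proof.
move=> Mv; apply/subsetP => x /setIP[/Mv[_ _ [y [[xy exy]|[yx eyx ys]]]] xI].
  by have := independent_nonadj xI (upI (ltnW xy) xI); rewrite exy.
have yI : y \notin I by apply: contraL eyx => yI; apply: independent_nonadj.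
by rewrite inE; apply/existsP; exists y; rewrite !inE ys yI eyx.
Qed.

Lemma Mset_card_beta s : NCface e s ->
  #|Mset e s| + gammaA e I + #|nbhd e (~: s :&: ~: I) :&: ~: s :&: I| <= n.
Proof.
move=> ncs; have [_ [b [_ _ _ Mv]]] := Mset_vertex sym irr ncs.
set M := Mset e s; set N := nbhd e (~: s :&: ~: I).
have Ms : M \subset s by apply/subsetP => x /Mv[].
have NM : I :&: N \subset I :&: nbhd e (~: I :\: M).
  by rewrite setIS // nbhdS // setDE setIC setISS // setCS.
have MIN : M :&: I \subset (I :&: N) :&: s.
  apply/subsetP => x xMI; have /setIP[xM xI] := xMI.
  by rewrite !in_setI xI (subsetP Ms) // (subsetP (Mset_I_nbhd Mv)).
have BN : N :&: ~: s :&: I = (I :&: N) :\: s by rewrite setDE setIC setIA.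
have := gammaA_complement_bound sym noiso I M.
have := subset_leq_card NM; have := subset_leq_card MIN.
have := cardsID s (I :&: N); have := cardsID I M.
rewrite BN setDE; lia.
Qed.

Lemma Mset_card_beta0 s : NCface e s ->
  nbhd e (~: s :&: ~: I) :&: ~: s :&: I = set0 ->
  #|Mset e s| + gammaA e I + 1 <= n.
Proof.
move=> ncs B0; have [a [b [as_ bs eab Mv]]] := Mset_vertex sym irr ncs.
have bI : b \notin I.
  apply/negP => bI.
  have aI : a \notin I by apply: contraL eab => aI; apply: independent_nonadj.
  suff : b \in nbhd e (~: s :&: ~: I) :&: ~: s :&: I by rewrite B0 inE.
  by rewrite !inE bs bI !andbT; apply/existsP; exists a; rewrite !inE as_ aI eab.
have MI : b |: Mset e s \subset ~: I.
  rewrite subUset sub1set inE bI; apply/subsetP => x /Mv[_ xb _].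
  by rewrite inE; apply: contra bI; apply: upI.
have bM : b \notin Mset e s by apply: contra bs => /Mv[].
have := gammaA_complement_bound sym noiso I (b |: Mset e s).
rewrite (setIidPl MI) cardsU1 bM; lia.
Qed.

End Counting.

Theorem mainTheorem4 (n : nat) (e : rel 'I_n) (i : nat) :
  simple_graph e ->
  no_isolated e ->
  i <= n ->
  let I := [set v : 'I_n | n - i <= v] in
  maximal_independent e I ->
  gammaA e I = igamma e ->
  let beta := fun s : {set 'I_n} =>
    #|nbhd e (~: s :&: ~: I) :&: ~: s :&: I| in
  (forall s : {set 'I_n}, NCface e s -> 1 <= beta s ->
     #|Mset e s| + igamma e + beta s <= n) /\
  (forall s : {set 'I_n}, NCface e s ->
     #|Mset e s| + igamma e + 1 <= n).
Proof.
move=> [sym irr] noiso _ I [indI _] <- beta.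
have upI (x y : 'I_n) : x <= y -> x \in I -> y \in I.
  by rewrite !inE => xy /leq_trans; apply.
split=> s ncs; first by move=> _; apply: Mset_card_beta.
case: (posnP (beta s)) => [/cards0_eq|beta_pos]; first exact: Mset_card_beta0.
by apply: leq_trans (Mset_card_beta sym irr noiso indI upI ncs); rewrite leq_add2l.
Qed.
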